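(* Let $\mu$ be a probability measure on a measurable space $(E,\mathcal F)$ and let $(\mathcal E,\mathcal D(\mathcal E))$ be a non-conservative irreducible symmetric Dirichlet form on $L^2(\mu)$. Then there is $C>0$ such that $$\mu(f^2)\le C\,\mathcal E(f,f),\qquad f\in\mathcal D(\mathcal E),$$ if and only if there are $C_1,C_2>0$ such that $$\mu(f^2)\le C_1\,\mathcal E(f,f)+C_2\,\mu(|f|)^2,\qquad f\in\mathcal D(\mathcal E).$$
   Context: Non-conservative means either $1\notin\mathcal D(\mathcal E)$, or $1\in\mathcal D(\mathcal E)$ but $\mathcal E(1,1)>0$. In this setting, irreducible means that $f\in\mathcal D(\mathcal E)$ with $\mathcal E(f,f)=0$ implies $f=0$. *)

From HB Require Import structures.
From mathcomp Require Import all_boot all_order all_algebra.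
From mathcomp Require Import all_classical all_reals all_analysis.
Set Implicit Arguments. Unset Strict Implicit. Unset Printing Implicit Defensive.
Import Order.TTheory GRing.Theory Num.Theory.
Import numFieldNormedType.Exports.
Local Open Scope classical_set_scope.
Local Open Scope ring_scope.

Definition L2fun (d : measure_display) (E : measurableType d) (R : realType)
  (mu : {measure set E -> \bar R}) (f : E -> R) : Prop :=
  measurable_fun setT f /\ mu.-integrable setT (fun x => ((f x) ^+ 2)%:E).

Definition muR (d : measure_display) (E : measurableType d) (R : realType)
  (mu : {measure set E -> \bar R}) (f : E -> R) : R :=
  Rintegral mu setT f.

Definition ae_eq_fun (d : measure_display) (E : measurableType d) (R : realType)
  (mu : {measure set E -> \bar R}) (f g : E -> R) : Prop :=
  {ae mu, forall x, f x = g x}.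

Definition E1norm2 (d : measure_display) (E : measurableType d) (R : realType)
  (mu : {measure set E -> \bar R}) (Ef : (E -> R) -> (E -> R) -> R) (h : E -> R) : R :=
  Ef h h + muR mu (fun x => (h x) ^+ 2).

(* A symmetric Dirichlet form (Ef, D) on L^2(mu): elements of L^2 are represented by
   functions; the domain D and the form are required to be compatible with a.e.
   equality, so that they are well defined on L^2 classes. *)
Record symmetric_Dirichlet_form (d : measure_display) (E : measurableType d)
  (R : realType) (mu : {measure set E -> \bar R})
  (D : set (E -> R)) (Ef : (E -> R) -> (E -> R) -> R) : Prop := {
  dform_L2 : forall f, D f -> L2fun mu f;
  dform_ae_dom : forall f g, D f -> L2fun mu g -> ae_eq_fun mu f g -> D g;
  dform_ae_form : forall f f' g g', D f -> D g -> ae_eq_fun mu f f' ->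
      ae_eq_fun mu g g' -> Ef f g = Ef f' g';
  dform_dom0 : D (fun _ => 0);
  dform_domD : forall f g, D f -> D g -> D (fun x => f x + g x);
  dform_domZ : forall (a : R) f, D f -> D (fun x => a * f x);
  dform_dense : forall f, L2fun mu f -> forall eps : R, 0 < eps ->
      exists g, D g /\ muR mu (fun x => (f x - g x) ^+ 2) < eps;
  dform_sym : forall f g, D f -> D g -> Ef f g = Ef g f;
  dform_lin : forall (a : R) f g h, D f -> D g -> D h ->
      Ef (fun x => a * f x + g x) h = a * Ef f h + Ef g h;
  dform_nonneg : forall f, D f -> 0 <= Ef f f;
  dform_closed : forall u : nat -> E -> R, (forall n, D (u n)) ->
      (forall eps : R, 0 < eps -> exists N : nat, forall m n : nat,
          (N <= m)%N -> (N <= n)%N ->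
          E1norm2 mu Ef (fun x => u n x - u m x) < eps) ->
      exists f, D f /\
        E1norm2 mu Ef (fun x => u n x - f x) @[n --> \oo] --> (0 : R);
  dform_markov : forall f, D f ->
      D (fun x => Num.min (Num.max (f x) 0) 1) /\
      Ef (fun x => Num.min (Num.max (f x) 0) 1)
         (fun x => Num.min (Num.max (f x) 0) 1) <= Ef f f
}.

Definition non_conservative (d : measure_display) (E : measurableType d)
  (R : realType) (D : set (E -> R)) (Ef : (E -> R) -> (E -> R) -> R) : Prop :=
  ~ D (fun _ => 1) \/ (D (fun _ => 1) /\ 0 < Ef (fun _ => 1) (fun _ => 1)).

Definition dform_irreducible (d : measure_display) (E : measurableType d)
  (R : realType) (mu : {measure set E -> \bar R})
  (D : set (E -> R)) (Ef : (E -> R) -> (E -> R) -> R) : Prop :=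
  forall f, D f -> Ef f f = 0 -> ae_eq_fun mu f (fun _ => 0).

From HB Require Import structures.
From mathcomp Require Import all_boot all_order all_algebra.
From mathcomp Require Import all_classical all_reals all_analysis.
From mathcomp Require Import ring lra measurable_realfun.
Import Order.TTheory GRing.Theory Num.Theory.
Import numFieldNormedType.Exports.
Local Open Scope classical_set_scope.
Local Open Scope ring_scope.

(* Only the converse implication has content.  If the Poincare inequality fails,
   there are f with K E(f,f) < mu(f^2) for arbitrarily large K; for these the
   defective inequality bounds mu(f^2) by a multiple of mu(|f|)^2.  Replacing f by
   -f if needed, cutting it off at a suitable level (the only contraction granted
   by the Markov property) and normalising yields, for every k, functions h of mean
   1 and energy at most 1/(k+1) whose E_1-norms are bounded uniformly in k.  These
   sets are convex and shrink with k, so by the parallelogram law a minimising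
   sequence for the E_1-norm is Cauchy; since the form is closed it has a limit p,
   which has zero energy and mean 1, contradicting irreducibility. *)

Section muR_linear.
Context {d : measure_display} {E : measurableType d} {R : realType}
  {mu : {measure set E -> \bar R}}.
Local Notation integrableR f := (mu.-integrable setT (EFin \o f)).

Lemma integrableR_add {u v : E -> R} : integrableR u -> integrableR v ->
  integrableR (fun x => u x + v x).
Proof.
move=> iu iv; apply: (eq_integrable measurableT _ _ _ (integrableD measurableT iu iv)).
by move=> x _; rewrite /= EFinD.
Qed.

Lemma integrableR_scale (a : R) {u : E -> R} : integrableR u ->
  integrableR (fun x => a * u x).
Proof.
move=> iu; apply: (eq_integrable measurableT _ _ _ (integrableZl measurableT a iu)).
by move=> x _; rewrite /= EFinM.
Qed.

Lemma muRD (u v : E -> R) : integrableR u -> integrableR v ->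
  muR mu (fun x => u x + v x) = muR mu u + muR mu v.
Proof. by move=> iu iv; rewrite /muR RintegralD. Qed.

Lemma muRZ (a : R) (u : E -> R) : integrableR u ->
  muR mu (fun x => a * u x) = a * muR mu u.
Proof. by move=> iu; rewrite /muR RintegralZl. Qed.

Lemma le_muR (u v : E -> R) : integrableR u -> integrableR v ->
  (forall x, u x <= v x) -> muR mu u <= muR mu v.
Proof. by move=> iu iv uv; rewrite /muR le_Rintegral. Qed.

Lemma muR_ge0 (u : E -> R) : (forall x, 0 <= u x) -> 0 <= muR mu u.
Proof. by move=> u0; rewrite /muR Rintegral_ge0. Qed.

Lemma eq_muR (u v : E -> R) : u =1 v -> muR mu u = muR mu v.
Proof. by move=> uv; rewrite /muR (@eq_Rintegral _ _ _ _ _ v) // => x _. Qed.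

Lemma muR_ae_eq0 {u : E -> R} : measurable_fun setT u ->
  ae_eq_fun mu u (fun _ => 0) -> muR mu u = 0.
Proof.
move=> mu_u u0; rewrite /muR /Rintegral.
rewrite (@ae_eq_integral _ _ _ mu setT (EFin \o (fun _ => 0)) (EFin \o u)) //.
- by rewrite /= integral0.
- exact/measurable_EFinP.
- exact/measurable_EFinP/measurable_cst.
- by apply: filterS u0 => x ux _; rewrite /= ux.
Qed.

End muR_linear.

Section L2_finite_measure.
Context {d : measure_display} {E : measurableType d} {R : realType}
  {mu : {finite_measure set E -> \bar R}}.
Local Notation integrableR f := (mu.-integrable setT (EFin \o f)).

Lemma L2fun_integrable {f : E -> R} : L2fun mu f -> integrableR f.
Proof.
move=> [mf if2].
have h : integrableR (fun x => 1 + f x ^+ 2).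
  have i1 : integrableR (fun _ => 1) := finite_measure_integrable_cst _ _ measurableT.
  exact: integrableR_add i1 if2.
apply: (le_integrable _ _ _ h) => //; first exact/measurable_EFinP.
move=> x _ /=; rewrite lee_fin [X in _ <= X]ger0_norm ?addr_ge0 ?sqr_ge0//.
rewrite -(real_normK (num_real (f x))).
have := sqr_ge0 (`|f x| - 1); have := normr_ge0 (f x); nra.
Qed.

Lemma L2fun_integrableM {f g : E -> R} : L2fun mu f -> L2fun mu g ->
  integrableR (fun x => f x * g x).
Proof.
move=> [mf if2] [mg ig2].
have h := integrableR_add if2 ig2.
apply: (le_integrable _ _ _ h) => //.
  exact/measurable_EFinP/measurable_funM.
move=> x _ /=; rewrite lee_fin [`|_ + _|]ger0_norm ?addr_ge0 ?sqr_ge0//.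
rewrite normrM -(real_normK (num_real (f x))) -(real_normK (num_real (g x))).
have := sqr_ge0 (`|f x| - `|g x|); nra.
Qed.

End L2_finite_measure.

Section probability_moments.
Context {d : measure_display} {E : measurableType d} {R : realType}
  {mu : probability E R}.

Lemma muR_cst (k : R) : muR mu (fun _ => k) = k.
Proof.
have mu1 : fine (mu setT) = 1 by rewrite probability_setT.
by rewrite /muR Rintegral_cst// mu1 mulr1.
Qed.

Lemma muR_sqr_le {u : E -> R} : L2fun mu u ->
  muR mu u ^+ 2 <= muR mu (fun x => u x ^+ 2).
Proof.
move=> L2u; set m := muR mu u.
have iu := L2fun_integrable L2u; have iu2 := L2u.2.
have : 0 <= muR mu (fun x => (u x - m) ^+ 2) by apply: muR_ge0 => x; exact: sqr_ge0.
rewrite (@eq_muR _ _ _ _ _ (fun x => (u x ^+ 2 + (-2 * m) * u x) + m ^+ 2));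
  last by move=> x; ring.
have i1 : mu.-integrable setT (EFin \o (fun _ => m ^+ 2)) :=
  finite_measure_integrable_cst _ _ measurableT.
have i2 := integrableR_add iu2 (integrableR_scale (-2 * m) iu).
rewrite muRD // muRD //; last exact: integrableR_scale.
rewrite (muRZ _ _ iu) -/m.
have -> : muR mu (fun _ => m ^+ 2) = m ^+ 2 := muR_cst _.
nra.
Qed.

End probability_moments.

Definition lincomb {T : Type} {R : pzRingType} (a : R) (f : T -> R) (b : R) (g : T -> R) :
    T -> R :=
  fun x => a * f x + b * g x.

Lemma lincomb1N1 {T : Type} {R : pzRingType} (f g : T -> R) :
  lincomb 1 f (-1) g = (fun x => f x - g x).
Proof. by apply/funext => x; rewrite /lincomb mul1r mulN1r. Qed.

Section dirichlet_form_bilinear.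
Context {d : measure_display} {E : measurableType d} {R : realType}
  {mu : {measure set E -> \bar R}} {D : set (E -> R)} {Ef : (E -> R) -> (E -> R) -> R}.
Hypothesis HD : symmetric_Dirichlet_form mu D Ef.

Lemma dform_dom_lincomb (a b : R) {f g : E -> R} : D f -> D g -> D (lincomb a f b g).
Proof. by move=> Df Dg; apply: (dform_domD HD); apply: (dform_domZ HD). Qed.

Lemma dform0l {h : E -> R} : D h -> Ef (fun _ => 0) h = 0.
Proof.
move=> Dh; have := dform_lin HD 1 (dform_dom0 HD) (dform_dom0 HD) Dh.
have -> : (fun x : E => 1 * (fun _ : E => 0 : R) x + (fun _ => 0) x) = (fun _ => 0).
  by apply/funext => x; rewrite mulr0 addr0.
rewrite mul1r => lin0; lra.
Qed.

Lemma dformZl (a : R) {f h : E -> R} : D f -> D h ->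
  Ef (fun x => a * f x) h = a * Ef f h.
Proof.
move=> Df Dh; have := dform_lin HD a Df (dform_dom0 HD) Dh.
have -> : (fun x : E => a * f x + (fun _ => 0 : R) x) = (fun x => a * f x).
  by apply/funext => x; rewrite addr0.
by rewrite dform0l // addr0.
Qed.

Lemma dformZ (a : R) {f : E -> R} : D f ->
  Ef (fun x => a * f x) (fun x => a * f x) = a ^+ 2 * Ef f f.
Proof.
move=> Df; have Daf : D (fun x => a * f x) by apply: (dform_domZ HD).
by rewrite dformZl // (dform_sym HD Df Daf) dformZl // mulrA -expr2.
Qed.

Lemma dform_lincombl (a b : R) {f g h : E -> R} : D f -> D g -> D h ->
  Ef (lincomb a f b g) h = a * Ef f h + b * Ef g h.
Proof.
move=> Df Dg Dh; have := dform_lin HD a Df (dform_domZ HD b Dg) Dh.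
by rewrite dformZl.
Qed.

Lemma dform_lincomb (a b : R) {f g : E -> R} : D f -> D g ->
  Ef (lincomb a f b g) (lincomb a f b g) =
  a ^+ 2 * Ef f f + 2 * a * b * Ef f g + b ^+ 2 * Ef g g.
Proof.
move=> Df Dg; have Dc := dform_dom_lincomb a b Df Dg.
rewrite dform_lincombl // (dform_sym HD Df Dc) (dform_sym HD Dg Dc).
by rewrite !dform_lincombl // (dform_sym HD Dg Df); ring.
Qed.

Lemma dform_le_subr {f g : E -> R} : D f -> D g ->
  Ef g g <= 2 * Ef f f + 2 * Ef (lincomb 1 f (-1) g) (lincomb 1 f (-1) g).
Proof.
move=> Df Dg; have := dform_nonneg HD (dform_dom_lincomb 2 (-1) Df Dg).
by rewrite !dform_lincomb //; lra.
Qed.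

End dirichlet_form_bilinear.

Section real_cutoff.
Context {R : realFieldType}.

Definition cutoff (t y : R) := Num.min (Num.max y 0) t.

Lemma cutoff_scale (t y : R) : 0 < t -> t * cutoff 1 (t^-1 * y) = cutoff t y.
Proof.
move=> t0; rewrite /cutoff; have tV0 : 0 < t^-1 by rewrite invr_gt0.
have [y0|y0] := leP y 0.
  have : t^-1 * y <= 0 by rewrite pmulr_rle0.
  by move=> h; rewrite (max_r h) (min_l ler01) (min_l (ltW t0)) mulr0.
have h1 : 0 <= t^-1 * y by rewrite pmulr_rge0 // ltW.
rewrite (max_l h1); have [yt|yt] := leP y t.
  have : t^-1 * y <= 1 by rewrite -(mulVf (lt0r_neq0 t0)) ler_pM2l.
  by move=> h; rewrite (min_l h) mulrA mulfV ?gt_eqF // mul1r.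
have : 1 < t^-1 * y by rewrite -(mulVf (lt0r_neq0 t0)) ltr_pM2l.
by move=> h; rewrite (min_r (ltW h)) mulr1.
Qed.

Lemma cutoff_sqr_le (t y : R) : 0 < t -> cutoff t y ^+ 2 <= y ^+ 2.
Proof.
move=> t0; rewrite /cutoff; have [y0|y0] := leP y 0.
  by rewrite (min_l (ltW t0)) expr0n sqr_ge0.
have [yt|yt] := leP y t => //; nra.
Qed.

Lemma pos_part_sub_cutoff_le (t y : R) : 0 < t ->
  Num.max y 0 - cutoff t y <= t^-1 * y ^+ 2.
Proof.
move=> t0; rewrite /cutoff; have tV0 : 0 < t^-1 by rewrite invr_gt0.
have hy2 : 0 <= t^-1 * y ^+ 2 by rewrite mulr_ge0 ?sqr_ge0 // ltW.
have [y0|y0] := leP y 0; first by rewrite (min_l (ltW t0)) subrr.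
have [yt|yt] := leP y t; first by rewrite subrr.
have -> : t^-1 * y ^+ 2 = y * (t^-1 * y) by rewrite expr2 mulrCA.
have : 1 < t^-1 * y by rewrite -(mulVf (lt0r_neq0 t0)) ltr_pM2l.
nra.
Qed.

End real_cutoff.

Section dirichlet_form_probability.
Context {d : measure_display} {E : measurableType d} {R : realType}
  {mu : probability E R} {D : set (E -> R)} {Ef : (E -> R) -> (E -> R) -> R}.
Hypothesis HD : symmetric_Dirichlet_form mu D Ef.
Local Notation E1 := (E1norm2 mu Ef).

Lemma dform_integrable {f : E -> R} : D f -> mu.-integrable setT (EFin \o f).
Proof. by move=> /(dform_L2 HD) /L2fun_integrable. Qed.

Lemma dform_integrable_sqr {f : E -> R} : D f ->
  mu.-integrable setT (EFin \o (fun x => f x ^+ 2)).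
Proof. by move=> /(dform_L2 HD) []. Qed.

Lemma E1norm2_ge0 {h : E -> R} : D h -> 0 <= E1 h.
Proof.
move=> Dh; rewrite /E1norm2 addr_ge0 ?(dform_nonneg HD) //.
by apply: muR_ge0 => x; exact: sqr_ge0.
Qed.

Lemma muR_lincomb (a b : R) {f g : E -> R} : D f -> D g ->
  muR mu (lincomb a f b g) = a * muR mu f + b * muR mu g.
Proof.
move=> /dform_integrable iF /dform_integrable iG.
by rewrite /lincomb muRD ?muRZ //; exact: integrableR_scale.
Qed.

Lemma E1norm2_lincomb (a b : R) {f g : E -> R} : D f -> D g ->
  E1 (lincomb a f b g) =
  a ^+ 2 * E1 f + 2 * a * b * (Ef f g + muR mu (fun x => f x * g x)) + b ^+ 2 * E1 g.
Proof.
move=> Df Dg; rewrite /E1norm2 (dform_lincomb HD) //.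
have iF2 := dform_integrable_sqr Df; have iG2 := dform_integrable_sqr Dg.
have iFG := L2fun_integrableM (dform_L2 HD Df) (dform_L2 HD Dg).
rewrite (@eq_muR _ _ _ _ _ (fun x => (a ^+ 2 * f x ^+ 2 + 2 * a * b * (f x * g x))
   + b ^+ 2 * g x ^+ 2)); last by move=> x; rewrite /lincomb; ring.
rewrite muRD; last 2 first.
- by apply: integrableR_add; exact: integrableR_scale.
- exact: integrableR_scale.
rewrite muRD ?muRZ //; first ring.
all: exact: integrableR_scale.
Qed.

Lemma E1norm2_parallelogram {f g : E -> R} : D f -> D g ->
  E1 (fun x => f x - g x) = 2 * E1 f + 2 * E1 g - 4 * E1 (lincomb (1/2) f (1/2) g).
Proof. by move=> Df Dg; rewrite -lincomb1N1 !E1norm2_lincomb //; field. Qed.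

Definition unit_mean_small_energy (k : nat) (h : E -> R) :=
  [/\ D h, muR mu h = 1 & Ef h h <= k.+1%:R^-1].

Lemma unit_mean_small_energyW {k l : nat} {h : E -> R} : (k <= l)%N ->
  unit_mean_small_energy l h -> unit_mean_small_energy k h.
Proof.
move=> kl [Dh mh eh]; split => //; apply: le_trans eh _.
by rewrite lef_pV2 ?posrE // ler_nat.
Qed.

Lemma unit_mean_small_energy_midpoint {k : nat} {f g : E -> R} :
  unit_mean_small_energy k f -> unit_mean_small_energy k g ->
  unit_mean_small_energy k (lincomb (1/2) f (1/2) g).
Proof.
move=> [Df mf Ef_le] [Dg mg Eg_le]; split.
- exact: (dform_dom_lincomb HD).
- by rewrite muR_lincomb // mf mg; field.
- rewrite (dform_lincomb HD) //.
  have := dform_nonneg HD (dform_dom_lincomb HD 1 (-1) Df Dg).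
  rewrite (dform_lincomb HD) // !expr2.
  move: Ef_le Eg_le; move: (k.+1%:R^-1) => t; lra.
Qed.

Definition E1_cauchy (u : nat -> E -> R) := forall eps : R, 0 < eps ->
  exists N : nat, forall m n : nat, (N <= m)%N -> (N <= n)%N ->
    E1 (fun x => u n x - u m x) < eps.

(* M is the supremum over k of the infimum of E1 on the (shrinking) sets
   unit_mean_small_energy k. *)
Lemma E1_minimizing_sequence {B : R} :
  (forall k, exists h, unit_mean_small_energy k h /\ E1 h <= B) ->
  exists (M : R) (u : nat -> E -> R),
    (forall n, unit_mean_small_energy n (u n) /\ E1 (u n) < M + n.+1%:R^-1) /\
    (forall e, 0 < e -> exists k, forall h, unit_mean_small_energy k h -> M - e < E1 h).
Proof.
move=> bounded.
pose L := [set v : R | exists k, forall h, unit_mean_small_energy k h -> v <= E1 h].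
have supL : has_sup L.
  split; first by exists 0, 0%N => h [Dh _ _]; exact: E1norm2_ge0.
  exists B => v [k Hk]; have [h [Sh hB]] := bounded k; exact: le_trans (Hk _ Sh) hB.
exists (sup L).
have near_sup k : exists h, unit_mean_small_energy k h /\ E1 h < sup L + k.+1%:R^-1.
  apply: contrapT => Hn.
  have : L (sup L + k.+1%:R^-1).
    exists k => h Sh; rewrite leNgt; apply/negP => lt; apply: Hn; exists h; split => //.
  move=> /(sup_upper_bound supL).
  have : 0 < (k.+1%:R : R)^-1 by rewrite invr_gt0.
  move: (k.+1%:R^-1) => t; lra.
have [u Hu] := choice near_sup; exists u; split => // e e0.
have [v [k Hk] lt] := sup_adherent e0 supL.
by exists k => h Sh; exact: lt_le_trans lt (Hk _ Sh).
Qed.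

Lemma E1_minimizing_cauchy {M : R} {u : nat -> E -> R} :
  (forall n, unit_mean_small_energy n (u n) /\ E1 (u n) < M + n.+1%:R^-1) ->
  (forall e, 0 < e -> exists k, forall h, unit_mean_small_energy k h -> M - e < E1 h) ->
  E1_cauchy u.
Proof.
move=> Hu Hlow eps eps0; have e0 : 0 < eps / 8 by rewrite divr_gt0.
have [k0 Hk0] := Hlow _ e0.
have [k1 _ Hk1] := near_infty_natSinv_lt (PosNum e0).
have Hb j : (maxn k0 k1 <= j)%N ->
    unit_mean_small_energy k0 (u j) /\ E1 (u j) < M + eps / 8.
  move=> hj; have [Sj Nj] := Hu j; split.
    exact: unit_mean_small_energyW (leq_trans (leq_maxl _ _) hj) Sj.
  apply: lt_trans Nj _; rewrite ltrD2l.
  exact: Hk1 (leq_trans (leq_maxr _ _) hj).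
exists (maxn k0 k1) => m n hm hn.
have [Sm Nm] := Hb m hm; have [Sn Nn] := Hb n hn.
have Nmid := Hk0 _ (unit_mean_small_energy_midpoint Sn Sm).
have [Dm _ _] := Sm; have [Dn _ _] := Sn.
rewrite E1norm2_parallelogram //; lra.
Qed.

Lemma E1_limit_unit_mean_null {u : nat -> E -> R} {p : E -> R} :
  (forall n, unit_mean_small_energy n (u n)) -> D p ->
  E1 (fun x => u n x - p x) @[n --> \oo] --> (0 : R) ->
  Ef p p = 0 /\ muR mu p = 1.
Proof.
move=> Su Dp up.
have Du n : D (u n) by case: (Su n).
have Dsub n : D (fun x => u n x - p x).
  by rewrite -lincomb1N1; exact: (dform_dom_lincomb HD).
have sub_small e : 0 < e -> exists n, E1 (fun x => u n x - p x) < e /\ n.+1%:R^-1 < e.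
  move=> e0; have [N _ HN] := cvgr0_norm_lt _ up e e0.
  have [k _ Hk] := near_infty_natSinv_lt (PosNum e0).
  exists (maxn N k); split; last exact: Hk (leq_maxr _ _).
  exact: le_lt_trans (ler_norm _) (HN _ (leq_maxl _ _)).
have E_le_E1 n : Ef (fun x => u n x - p x) (fun x => u n x - p x) <=
    E1 (fun x => u n x - p x).
  by rewrite /E1norm2 lerDl; apply: muR_ge0 => x; exact: sqr_ge0.
split.
  apply/eqP; rewrite eq_le (dform_nonneg HD) // andbT.
  apply/ler_addgt0Pr => e e0; rewrite add0r.
  have [n [small_sub small_n]] := sub_small (e / 4) (divr_gt0 e0 (ltr0n _ 4)).
  have [_ _ En] := Su n; have := dform_le_subr HD (Du n) Dp.
  rewrite lincomb1N1; have := E_le_E1 n.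
  move: En small_n; move: (n.+1%:R^-1) => t; lra.
have mu_sub n : muR mu (fun x => u n x - p x) = 1 - muR mu p.
  by rewrite -lincomb1N1 muR_lincomb // ?mul1r ?mulN1r; case: (Su n) => _ -> _.
suff : (1 - muR mu p) ^+ 2 <= 0.
  by rewrite le_eqVlt ltNge sqr_ge0 orbF sqrf_eq0 subr_eq0 => /eqP <-.
apply/ler_addgt0Pr => e e0; rewrite add0r.
have [n [small_sub _]] := sub_small e e0.
have := muR_sqr_le (dform_L2 HD (Dsub n)); rewrite mu_sub.
have := dform_nonneg HD (Dsub n); rewrite /E1norm2 in small_sub; lra.
Qed.

Lemma irreducible_no_bounded_unit_mean_small_energy (B : R) :
  dform_irreducible mu D Ef ->
  ~ (forall k, exists h, unit_mean_small_energy k h /\ E1 h <= B).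
Proof.
move=> irr bounded.
have [M [u [Hu Hlow]]] := E1_minimizing_sequence bounded.
have Du n : D (u n) by case: (Hu n) => [[]].
have [p [Dp up]] := dform_closed HD Du (E1_minimizing_cauchy Hu Hlow).
have [Ep0 mup] := E1_limit_unit_mean_null (fun n => (Hu n).1) Dp up.
have := muR_ae_eq0 (dform_L2 HD Dp).1 (irr p Dp Ep0).
by rewrite mup; apply/eqP; rewrite oner_neq0.
Qed.

Lemma dform_cutoff {t : R} {F : E -> R} : 0 < t -> D F ->
  D (fun x => cutoff t (F x)) /\
  Ef (fun x => cutoff t (F x)) (fun x => cutoff t (F x)) <= Ef F F.
Proof.
move=> t0 DF; have DFt : D (fun x => t^-1 * F x) := dform_domZ HD _ DF.
have [DT ET] := dform_markov HD DFt.
have -> : (fun x => cutoff t (F x)) = (fun x => t * cutoff 1 (t^-1 * F x)).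
  by apply/funext => x; rewrite cutoff_scale.
have DT1 : D (fun x => cutoff 1 (t^-1 * F x)) := DT.
split; first exact: (dform_domZ HD t DT1).
rewrite (dformZ HD) //; move: ET; rewrite (dformZ HD) // => ET.
apply: le_trans (ler_wpM2l (sqr_ge0 t) ET) _.
by rewrite mulrA -exprMn mulfV ?gt_eqF // expr1n mul1r.
Qed.

Lemma dform_integrable_pos_part {F : E -> R} : D F ->
  mu.-integrable setT (EFin \o (fun x => Num.max (F x) 0)).
Proof.
move=> DF; apply: (le_integrable measurableT _ _ (dform_integrable DF)).
  apply/measurable_EFinP/measurable_maxr; last exact: measurable_cst.
  exact: (dform_L2 HD DF).1.
move=> x _ /=; rewrite lee_fin; have [h|h] := leP (F x) 0; first by rewrite normr0.
by rewrite gtr0_norm.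
Qed.

Lemma exists_sign_pos_part_ge {f : E -> R} : D f ->
  exists F, [/\ D F, Ef F F = Ef f f,
    muR mu (fun x => F x ^+ 2) = muR mu (fun x => f x ^+ 2)
    & muR mu (fun x => `|f x|) <= 2 * muR mu (fun x => Num.max (F x) 0)].
Proof.
move=> Df; pose g x := -1 * f x.
have Dg : D g := dform_domZ HD _ Df.
have norm_split : muR mu (fun x => `|f x|) =
    muR mu (fun x => Num.max (f x) 0) + muR mu (fun x => Num.max (g x) 0).
  rewrite -muRD ?dform_integrable_pos_part //; apply: eq_muR => x.
  rewrite /g mulN1r; have [fx0|fx0] := leP (f x) 0.
    by rewrite ler0_norm // add0r (max_l _) // oppr_ge0.
  by rewrite gtr0_norm // (max_r _) ?addr0 // oppr_le0 ltW.
have [le_gf|lt_fg] := leP (muR mu (fun x => Num.max (g x) 0))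
                          (muR mu (fun x => Num.max (f x) 0)).
  by exists f; split => //; lra.
exists g; split => //; last by lra.
- by rewrite (dformZ HD) // expr2 mulN1r opprK mul1r.
- by apply: eq_muR => x; rewrite /g mulN1r sqrrN.
Qed.

Lemma unit_mean_of_pos_part {F : E -> R} : D F ->
  0 < muR mu (fun x => Num.max (F x) 0) ->
  exists H, [/\ D H, muR mu H = 1,
    muR mu (fun x => Num.max (F x) 0) ^+ 2 * muR mu (fun x => H x ^+ 2) <=
      4 * muR mu (fun x => F x ^+ 2)
    & muR mu (fun x => Num.max (F x) 0) ^+ 2 * Ef H H <= 4 * Ef F F].
Proof.
move=> DF; set b := muR mu _ => b0; set s := muR mu (fun x => F x ^+ 2).
have s0 : 0 <= s by apply: muR_ge0 => x; exact: sqr_ge0.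
pose t := 2 * s / b + 1.
have t0 : 0 < t by rewrite /t ltr_wpDl // divr_ge0 // ?mulr_ge0 // ltW.
have tVs : t^-1 * s <= b / 2.
  have bt : b / 2 * t = s + b / 2 by rewrite /t; field; rewrite gt_eqF.
  by rewrite mulrC ler_pdivrMr // bt; lra.
pose G x := cutoff t (F x).
have [DG EG] : D G /\ Ef G G <= Ef F F := dform_cutoff t0 DF.
have iF2 := dform_integrable_sqr DF; have iG2 := dform_integrable_sqr DG.
have mG2 : muR mu (fun x => G x ^+ 2) <= s.
  by apply: le_muR => // x; exact: cutoff_sqr_le.
have mG : b <= muR mu G + t^-1 * s.
  rewrite -muRZ // -muRD ?(integrableR_scale _ iF2) ?dform_integrable //.
  apply: le_muR => [||x]; first exact: dform_integrable_pos_part.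
    exact: integrableR_add (dform_integrable DG) (integrableR_scale _ iF2).
  by rewrite -lerBlDl; exact: pos_part_sub_cutoff_le.
set m := muR mu G in mG; have m0 : 0 < m by lra.
have bm2 : b ^+ 2 * m ^- 2 <= 4.
  have bm : b / m <= 2 by rewrite ler_pdivrMr //; lra.
  have bm0 : 0 <= b / m by rewrite divr_ge0 // ltW.
  by rewrite -exprVn -exprMn expr2; nra.
exists (fun x => m^-1 * G x); split.
- exact: (dform_domZ HD _ DG).
- by rewrite muRZ ?dform_integrable // mulVf ?gt_eqF.
- rewrite (@eq_muR _ _ _ _ _ (fun x => m ^- 2 * G x ^+ 2)); last first.
    by move=> x; rewrite exprMn exprVn.
  rewrite muRZ // mulrA; apply: le_trans (ler_wpM2r _ bm2) (ler_wpM2l _ mG2) => //.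
  by apply: muR_ge0 => x; exact: sqr_ge0.
- rewrite (dformZ HD) // exprVn mulrA.
  exact: le_trans (ler_wpM2r (dform_nonneg HD DG) bm2) (ler_wpM2l _ EG).
Qed.

Lemma defective_poincare_unit_mean_small_energy {C1 C2 : R} : 0 < C1 -> 0 < C2 ->
  (forall f, D f -> muR mu (fun x => f x ^+ 2) <=
     C1 * Ef f f + C2 * muR mu (fun x => `|f x|) ^+ 2) ->
  (forall K, 0 < K -> exists f, D f /\ K * Ef f f < muR mu (fun x => f x ^+ 2)) ->
  forall k, exists h, unit_mean_small_energy k h /\ E1 h <= 32 * C2 + 1.
Proof.
move=> C1_gt0 C2_gt0 defective not_poincare k.
have k_ge1 : 1 <= (k.+1%:R : R) by rewrite ler1n.
have [K [K_gt0 K_ge_C1 K_ge_k]] : exists K,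
    [/\ 0 < K, 2 * C1 <= K & 32 * C2 * k.+1%:R <= K].
  exists (2 * C1 + 32 * C2 * k.+1%:R); split; [nra | | ]; rewrite ?lerDl ?lerDr; nra.
have [f [Df Kf]] := not_poincare K K_gt0.
have Ef_ge0 := dform_nonneg HD Df.
have [F [DF EF sF aF]] := exists_sign_pos_part_ge Df.
move: Kf (defective f Df) aF; rewrite -sF -EF.
set s := muR mu (fun x => F x ^+ 2); set a := muR mu (fun x => `|f x|).
set b := muR mu (fun x => Num.max (F x) 0) => Kf def_f aF.
have a_ge0 : 0 <= a by apply: muR_ge0 => x; exact: normr_ge0.
have KE_ge : 2 * C1 * Ef F F <= K * Ef F F.
  by apply: ler_wpM2r; rewrite ?EF.
have s_gt0 : 0 < s by rewrite -EF in Ef_ge0; nra.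
have s_le : s <= 8 * C2 * b ^+ 2.
  have a2 : a ^+ 2 <= 4 * b ^+ 2 by rewrite !expr2; nra.
  have : C2 * a ^+ 2 <= C2 * (4 * b ^+ 2) by rewrite ler_pM2l.
  lra.
have b_gt0 : 0 < b.
  have b_ge0 : 0 <= b by apply: muR_ge0 => x; rewrite le_max lexx orbT.
  rewrite lt_neqAle b_ge0 andbT eq_sym; apply/eqP => b0.
  by move: s_le; rewrite b0 expr2 !mulr0; lra.
have [H [DH muH H2 EH]] := unit_mean_of_pos_part DF b_gt0.
rewrite -/b -/s in H2 EH.
have b2_gt0 : 0 < b ^+ 2 by rewrite exprn_gt0.
have H2_le : muR mu (fun x => H x ^+ 2) <= 32 * C2.
  by rewrite -(ler_pM2l b2_gt0); nra.
have KEH_le : K * Ef H H <= 32 * C2.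
  rewrite -(ler_pM2l b2_gt0) mulrCA.
  apply: le_trans (ler_wpM2l (ltW K_gt0) EH) _; lra.
have EH_ge0 := dform_nonneg HD DH.
have EH_le : Ef H H <= k.+1%:R^-1.
  rewrite -(ler_pM2l (lt_le_trans ltr01 k_ge1)) mulfV ?gt_eqF ?(lt_le_trans ltr01) //.
  by rewrite -(ler_pM2l C2_gt0) -(ler_pM2l (ltr0n R 32)); nra.
exists H; split; first by split.
have : k.+1%:R^-1 <= 1 :> R by rewrite invf_le1 // (lt_le_trans ltr01).
by rewrite /E1norm2; move: EH_le; move: (k.+1%:R^-1) => t; lra.
Qed.

End dirichlet_form_probability.

Theorem theorem4p1 (d : measure_display) (E : measurableType d) (R : realType)
  (mu : probability E R) (D : set (E -> R)) (Ef : (E -> R) -> (E -> R) -> R) :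
  symmetric_Dirichlet_form mu D Ef ->
  non_conservative D Ef ->
  dform_irreducible mu D Ef ->
  (exists C : R, 0 < C /\
     forall f, D f -> muR mu (fun x => (f x) ^+ 2) <= C * Ef f f)
  <->
  (exists C1 C2 : R, [/\ 0 < C1, 0 < C2 &
     forall f, D f -> muR mu (fun x => (f x) ^+ 2) <=
        C1 * Ef f f + C2 * (muR mu (fun x => `|f x|)) ^+ 2]).
Proof.
move=> HD _ irr; split.
  case=> C [C_gt0 poincare]; exists C, 1; split => // f Df.
  by apply: le_trans (poincare f Df) _; rewrite lerDl mul1r sqr_ge0.
case=> C1 [C2 [C1_gt0 C2_gt0 defective]].
apply: contrapT => no_poincare.
apply: (irreducible_no_bounded_unit_mean_small_energy HD (32 * C2 + 1) irr).
apply: (defective_poincare_unit_mean_small_energy HD C1_gt0 C2_gt0 defective) => K K_gt0.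
apply: contrapT => none; apply: no_poincare; exists K; split => // f Df.
by rewrite leNgt; apply/negP => lt; apply: none; exists f.
Qed.
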